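(* Assume $g$ satisfies (Hg) and let $a\in(0,1)$, $k>0$. Then there exists $d_0=d_0(a,k)>0$ such that for every $0<d\le d_0$ and every sequence $(s_i)_{i\in\mathbb Z}\subset\{0,1\}$ there is at least one function $\Phi:\mathbb R\to\mathbb R$ satisfying $$0=d\big(k\Phi(\xi+1)-(k+1)\Phi(\xi)+\Phi(\xi-1)\big)+g(\Phi(\xi);a)\quad\text{for all }\xi\in\mathbb R$$ (i.e. a solution of the traveling wave equation with $c=0$) such that for every $i\in\mathbb Z$: $\Phi(i)\in[0,a)$ if $s_i=0$, and $\Phi(i)\in(a,1]$ if $s_i=1$.
   Context: A function $g:\mathbb R\times[0,1]\to\mathbb R$, $(u,a)\mapsto g(u;a)$, satisfies (Hg) if it is $C^1$ and for every $a\in(0,1)$: $g(0;a)=g(a;a)=g(1;a)=0$, $g'(0;a)<0$, $g'(1;a)<0$, $g'(a;a)>0$ (where $g'=\partial_u g$), $g(v;a)>0$ for $v\in(-\infty,0)\cup(a,1)$ and $g(v;a)<0$ for $v\in(0,a)\cup(1,\infty)$. *)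

From Stdlib Require Import Reals.
From Coquelicot Require Import Coquelicot.
Open Scope R_scope.

Definition cont_on_strip (h : R -> R -> R) : Prop :=
  forall u a, 0 <= a <= 1 ->
    forall eps : R, eps > 0 -> exists delta : R, delta > 0 /\
      forall v b, 0 <= b <= 1 -> Rabs (v - u) < delta -> Rabs (b - a) < delta ->
        Rabs (h v b - h u a) < eps.

(* g is C^1 on R x [0,1]: both partial derivatives exist (one-sided in a at the
   endpoints a = 0, 1) and are jointly continuous on R x [0,1]. *)
Definition C1_strip (g : R -> R -> R) : Prop :=
  exists gu ga : R -> R -> R,
    cont_on_strip gu /\ cont_on_strip ga /\
    (forall u a, 0 <= a <= 1 -> is_derive (fun v => g v a) u (gu u a)) /\
    (forall u a, 0 <= a <= 1 ->
       forall eps : R, eps > 0 -> exists delta : R, delta > 0 /\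
         forall b, 0 <= b <= 1 -> b <> a -> Rabs (b - a) < delta ->
           Rabs ((g u b - g u a) / (b - a) - ga u a) < eps).

Definition dg (g : R -> R -> R) (u a : R) : R := Derive (fun v => g v a) u.

Definition Hg (g : R -> R -> R) : Prop :=
  C1_strip g /\
  forall a, 0 < a < 1 ->
    g 0 a = 0 /\ g a a = 0 /\ g 1 a = 0 /\
    dg g 0 a < 0 /\ dg g 1 a < 0 /\ dg g a a > 0 /\
    (forall v, (v < 0 \/ (a < v < 1)) -> g v a > 0) /\
    (forall v, ((0 < v < a) \/ 1 < v) -> g v a < 0).

From Stdlib Require Import Reals ZArith Lra Classical.
From Coquelicot Require Import Coquelicot.
Open Scope R_scope.

(** Perron's method on the lattice [Z].  Written as
    [d (k u(i+1) + u(i-1)) + (f (u i) - d (k+1) u i) = 0], the lattice equation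
    is increasing in the neighbouring values, so the pointwise supremum of all
    subsolutions squeezed between a subsolution and a supersolution is a
    solution.  For [d] small, the profiles equal to [0] or [b1] (below) and to
    [b0] or [1] (above) according to the pattern [s], where
    [0 < b0 < a < b1 < 1] with [g b0 a < 0 < g b1 a], are such a pair.  The
    lattice solution, extended by [0] off the integers, solves the equation on
    all of [R] because [g 0 a = 0]. *)

Lemma continuity_pt_near (h : R -> R) (x eps : R) :
  continuity_pt h x -> 0 < eps ->
  exists del, 0 < del /\ forall y, Rabs (y - x) < del -> Rabs (h y - h x) < eps.
Proof.
  intros Hc Heps.
  destruct (proj1 (continuity_pt_locally h x) Hc (mkposreal eps Heps)) as [del Hdel].
  exists del; split; [apply cond_pos |].
  intros y Hy; exact (Hdel y Hy).
Qed.

Section LatticePerron.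

Variables (f : R -> R) (d k : R).
Hypothesis f_continuous : forall x, continuity_pt f x.
Hypothesis d_pos : 0 < d.
Hypothesis k_pos : 0 < k.

Definition lattice_residual (u : Z -> R) (i : Z) : R :=
  d * (k * u (i + 1)%Z - (k + 1) * u i + u (i - 1)%Z) + f (u i).

Definition lattice_coupling (u : Z -> R) (i : Z) : R :=
  d * (k * u (i + 1)%Z + u (i - 1)%Z).

Definition lattice_onsite (v : R) : R := f v - d * (k + 1) * v.

Lemma lattice_residual_split u i :
  lattice_residual u i = lattice_coupling u i + lattice_onsite (u i).
Proof. unfold lattice_residual, lattice_coupling, lattice_onsite; ring. Qed.

Lemma lattice_coupling_le u v i :
  (forall j, u j <= v j) -> lattice_coupling u i <= lattice_coupling v i.
Proof.
  intros Huv; unfold lattice_coupling.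
  pose proof (Huv (i + 1)%Z); pose proof (Huv (i - 1)%Z).
  apply Rmult_le_compat_l; nra.
Qed.

Lemma lattice_coupling_bounds u i :
  (forall j, 0 <= u j <= 1) -> 0 <= lattice_coupling u i <= d * (k + 1).
Proof.
  intros Hu; unfold lattice_coupling.
  pose proof (Hu (i + 1)%Z); pose proof (Hu (i - 1)%Z).
  split; [apply Rmult_le_pos | apply Rmult_le_compat_l]; nra.
Qed.

Lemma lattice_onsite_continuous x : continuity_pt lattice_onsite x.
Proof.
  apply continuity_pt_minus; [apply f_continuous |].
  apply continuity_pt_scal, continuity_pt_id.
Qed.

Lemma lattice_residual_le u v i :
  (forall j, u j <= v j) -> u i = v i -> lattice_residual u i <= lattice_residual v i.
Proof.
  intros Huv Hi; rewrite !lattice_residual_split, Hi.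
  pose proof (lattice_coupling_le u v i Huv); lra.
Qed.

Definition subsolution (u : Z -> R) : Prop := forall i, 0 <= lattice_residual u i.

Definition supersolution (u : Z -> R) : Prop := forall i, lattice_residual u i <= 0.

Definition raise_at (u : Z -> R) (i : Z) (v : R) (j : Z) : R :=
  if Z.eq_dec j i then v else u j.

Lemma raise_at_ge u i v : u i <= v -> forall j, u j <= raise_at u i v j.
Proof. intros Hv j; unfold raise_at; destruct (Z.eq_dec j i) as [-> | _]; lra. Qed.

Lemma raise_at_subsolution u i v :
  subsolution u -> u i <= v -> 0 <= lattice_coupling u i + lattice_onsite v ->
  subsolution (raise_at u i v).
Proof.
  intros Hu Hv Hi j; pose proof (raise_at_ge u i v Hv) as Hge.
  destruct (Z.eq_dec j i) as [-> | Hj].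
  - rewrite lattice_residual_split.
    replace (raise_at u i v i) with v by (unfold raise_at; destruct (Z.eq_dec i i); congruence).
    pose proof (lattice_coupling_le u (raise_at u i v) i Hge); lra.
  - apply Rle_trans with (lattice_residual u j); [apply Hu | apply lattice_residual_le; auto].
    unfold raise_at; destruct (Z.eq_dec j i); congruence.
Qed.

Section Between.

Variables lo hi : Z -> R.
Hypothesis lo_le_hi : forall i, lo i <= hi i.
Hypothesis lo_subsolution : subsolution lo.
Hypothesis hi_supersolution : supersolution hi.

Definition between (u : Z -> R) : Prop := forall i, lo i <= u i <= hi i.

Definition admissible (u : Z -> R) : Prop := between u /\ subsolution u.

Definition admissible_values (i : Z) (x : R) : Prop :=
  exists u, admissible u /\ x = u i.

Lemma admissible_lub_exists i : {m | is_lub (admissible_values i) m}.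
Proof.
  apply completeness.
  - exists (hi i); intros x [u [[Hu _] ->]]; apply Hu.
  - exists (lo i), lo; repeat split; auto using Rle_refl.
Qed.

Definition perron_sup (i : Z) : R := proj1_sig (admissible_lub_exists i).

Lemma perron_sup_lub i : is_lub (admissible_values i) (perron_sup i).
Proof. exact (proj2_sig (admissible_lub_exists i)). Qed.

Lemma admissible_le_perron_sup u : admissible u -> forall i, u i <= perron_sup i.
Proof. intros Hu i; apply (perron_sup_lub i); exists u; auto. Qed.

Lemma perron_sup_approx i del :
  0 < del -> exists u, admissible u /\ perron_sup i - del < u i.
Proof.
  intros Hdel; apply not_all_not_ex; intros Hnone.
  assert (perron_sup i <= perron_sup i - del); [| lra].
  apply (perron_sup_lub i); intros x [u [Hu ->]].
  apply Rnot_lt_le; intros Hlt; exact (Hnone u (conj Hu Hlt)).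
Qed.

Lemma perron_sup_between : between perron_sup.
Proof.
  intros i; split.
  - apply admissible_le_perron_sup; repeat split; auto using Rle_refl.
  - apply (perron_sup_lub i); intros x [u [[Hu _] ->]]; apply Hu.
Qed.

Lemma perron_sup_subsolution : subsolution perron_sup.
Proof.
  intros i; apply Rnot_lt_le; intros Hneg.
  destruct (continuity_pt_near lattice_onsite (perron_sup i) (- lattice_residual perron_sup i)
              (lattice_onsite_continuous _)) as [del [Hdel Hnear]]; [lra |].
  destruct (perron_sup_approx i del Hdel) as [u [Hu Hui]].
  pose proof (admissible_le_perron_sup u Hu) as Hle.
  assert (Hclose : Rabs (u i - perron_sup i) < del)
    by (pose proof (Hle i); apply Rabs_def1; lra).
  specialize (Hnear _ Hclose); apply Rabs_def2 in Hnear.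
  pose proof (proj2 Hu i) as Hsub.
  pose proof (lattice_coupling_le u perron_sup i Hle).
  rewrite lattice_residual_split in Hneg, Hnear, Hsub; lra.
Qed.

Lemma perron_sup_supersolution : supersolution perron_sup.
Proof.
  intros i; apply Rnot_lt_le; intros Hpos.
  pose proof (perron_sup_between i) as HUi.
  destruct (Req_dec (perron_sup i) (hi i)) as [Htop | Hroom].
  - assert (lattice_residual perron_sup i <= lattice_residual hi i)
      by (apply lattice_residual_le; [apply perron_sup_between | exact Htop]).
    pose proof (hi_supersolution i); lra.
  - destruct (continuity_pt_near lattice_onsite (perron_sup i) (lattice_residual perron_sup i)
                (lattice_onsite_continuous _)) as [del [Hdel Hnear]]; [lra |].
    assert (Hv_ex : exists v, perron_sup i < v <= hi i /\ Rabs (v - perron_sup i) < del).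
    { exists (Rmin (hi i) (perron_sup i + del / 2)).
      pose proof (Rmin_l (hi i) (perron_sup i + del / 2)).
      pose proof (Rmin_r (hi i) (perron_sup i + del / 2)).
      assert (perron_sup i < Rmin (hi i) (perron_sup i + del / 2)) by (apply Rmin_glb_lt; lra).
      repeat split; try apply Rabs_def1; lra. }
    destruct Hv_ex as [v [Hv Hclose]].
    specialize (Hnear v Hclose); apply Rabs_def2 in Hnear.
    assert (Hadm : admissible (raise_at perron_sup i v)).
    { split.
      - intros j; unfold raise_at; destruct (Z.eq_dec j i) as [-> | _];
          [lra | apply perron_sup_between].
      - apply raise_at_subsolution; [exact perron_sup_subsolution | lra |].
        rewrite lattice_residual_split in Hpos, Hnear; lra. }
    pose proof (admissible_le_perron_sup _ Hadm i) as Hle.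
    unfold raise_at in Hle; destruct (Z.eq_dec i i); [lra | congruence].
Qed.

Theorem lattice_solution_between :
  exists U, between U /\ forall i, lattice_residual U i = 0.
Proof.
  exists perron_sup; split; [exact perron_sup_between |].
  intros i; apply Rle_antisym;
    [apply perron_sup_supersolution | apply perron_sup_subsolution].
Qed.

End Between.

Section Pattern.

Variables (b0 b1 : R) (s : Z -> bool).
Hypothesis f_zero : f 0 = 0.
Hypothesis f_one : f 1 = 0.
Hypothesis b0_unit : 0 <= b0 <= 1.
Hypothesis b1_unit : 0 <= b1 <= 1.
Hypothesis f_b0 : f b0 <= - (d * (k + 1)).
Hypothesis f_b1 : d * (k + 1) <= f b1.

Definition pattern_lower (i : Z) : R := if s i then b1 else 0.

Definition pattern_upper (i : Z) : R := if s i then 1 else b0.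

Lemma pattern_lower_subsolution : subsolution pattern_lower.
Proof.
  intros i; rewrite lattice_residual_split.
  assert (Hunit : forall j, 0 <= pattern_lower j <= 1)
    by (intros j; unfold pattern_lower; destruct (s j); lra).
  pose proof (lattice_coupling_bounds pattern_lower i Hunit).
  unfold lattice_onsite, pattern_lower at 2 3; destruct (s i); nra.
Qed.

Lemma pattern_upper_supersolution : supersolution pattern_upper.
Proof.
  intros i; rewrite lattice_residual_split.
  assert (Hunit : forall j, 0 <= pattern_upper j <= 1)
    by (intros j; unfold pattern_upper; destruct (s j); lra).
  pose proof (lattice_coupling_bounds pattern_upper i Hunit).
  unfold lattice_onsite, pattern_upper at 2 3; destruct (s i); nra.
Qed.

Theorem lattice_solution_pattern :
  exists U, (forall i, lattice_residual U i = 0) /\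
    forall i, pattern_lower i <= U i <= pattern_upper i.
Proof.
  destruct (lattice_solution_between pattern_lower pattern_upper) as [U [HU Hres]].
  - intros i; unfold pattern_lower, pattern_upper; destruct (s i); lra.
  - exact pattern_lower_subsolution.
  - exact pattern_upper_supersolution.
  - exists U; split; [exact Hres | exact HU].
Qed.

End Pattern.

End LatticePerron.

Definition extend_by_zero (U : Z -> R) (x : R) : R :=
  if Req_EM_T x (IZR (Int_part x)) then U (Int_part x) else 0.

Lemma extend_by_zero_IZR U n : extend_by_zero U (IZR n) = U n.
Proof.
  unfold extend_by_zero.
  rewrite <- (Int_part_spec (IZR n) n) by lra.
  destruct (Req_EM_T (IZR n) (IZR n)); congruence.
Qed.

Lemma extend_by_zero_off_integers U x :
  (forall n, x <> IZR n) -> extend_by_zero U x = 0.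
Proof.
  intros Hx; unfold extend_by_zero.
  destruct (Req_EM_T x (IZR (Int_part x))) as [e |]; [destruct (Hx _ e) | reflexivity].
Qed.

Lemma extend_by_zero_solves (f : R -> R) (d k : R) (U : Z -> R) :
  f 0 = 0 -> (forall i, lattice_residual f d k U i = 0) ->
  forall xi,
    0 = d * (k * extend_by_zero U (xi + 1) - (k + 1) * extend_by_zero U xi
             + extend_by_zero U (xi - 1)) + f (extend_by_zero U xi).
Proof.
  intros f0 HU xi.
  destruct (classic (exists n, xi = IZR n)) as [[n ->] | Hoff].
  - replace (IZR n + 1) with (IZR (n + 1)) by (rewrite plus_IZR; ring).
    replace (IZR n - 1) with (IZR (n - 1)) by (rewrite minus_IZR; ring).
    rewrite !extend_by_zero_IZR; symmetry; exact (HU n).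
  - assert (Hshift : forall y m, xi = y + IZR m -> forall n, y <> IZR n).
    { intros y m Hy n e; apply Hoff; exists (n + m)%Z; rewrite plus_IZR; lra. }
    rewrite !extend_by_zero_off_integers, f0; [ring | ..].
    all: first [ refine (Hshift _ 0%Z _); lra | refine (Hshift _ 1%Z _); lra
               | refine (Hshift _ (-1)%Z _); lra ].
Qed.

Lemma C1_strip_continuity_pt (g : R -> R -> R) (a : R) :
  C1_strip g -> 0 <= a <= 1 -> forall x, continuity_pt (fun v => g v a) x.
Proof.
  intros (gu & ga & _ & _ & Hder & _) Ha x.
  apply continuity_pt_filterlim.
  apply (@ex_derive_continuous R_AbsRing R_NormedModule (fun v => g v a) x).
  exists (gu x a); exact (Hder x a Ha).
Qed.

Theorem proposition2p4 (g : R -> R -> R) (a k : R) :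
  Hg g -> 0 < a < 1 -> 0 < k ->
  exists d0 : R, d0 > 0 /\
    forall (d : R) (s : Z -> bool), 0 < d <= d0 ->
      exists Phi : R -> R,
        (forall xi : R,
           0 = d * (k * Phi (xi + 1) - (k + 1) * Phi xi + Phi (xi - 1)) + g (Phi xi) a) /\
        (forall i : Z,
           (s i = false -> 0 <= Phi (IZR i) < a) /\
           (s i = true -> a < Phi (IZR i) <= 1)).
Proof.
  intros [HC Hsign] Ha Hk.
  destruct (Hsign a Ha) as (g0 & _ & g1 & _ & _ & _ & Hpos & Hneg).
  assert (Hb0 : g (a / 2) a < 0) by (apply Hneg; left; lra).
  assert (Hb1 : 0 < g ((1 + a) / 2) a) by (apply Hpos; right; lra).
  set (m := Rmin (- g (a / 2) a) (g ((1 + a) / 2) a)).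
  assert (Hm : 0 < m /\ m <= - g (a / 2) a /\ m <= g ((1 + a) / 2) a)
    by (repeat split; [apply Rmin_glb_lt; lra | apply Rmin_l | apply Rmin_r]).
  exists (m / (k + 1)); split; [apply Rdiv_lt_0_compat; lra |].
  intros d s [Hd Hdd].
  assert (Hdk : d * (k + 1) <= m).
  { apply (Rmult_le_compat_r (k + 1)) in Hdd; [| lra].
    replace (m / (k + 1) * (k + 1)) with m in Hdd by (field; lra); exact Hdd. }
  destruct (lattice_solution_pattern (fun v => g v a) d k
              (C1_strip_continuity_pt g a HC ltac:(lra)) Hd Hk (a / 2) ((1 + a) / 2) s)
    as [U [HU Hbox]]; try lra.
  exists (extend_by_zero U); split.
  - exact (extend_by_zero_solves (fun v => g v a) d k U g0 HU).
  - intros i; rewrite extend_by_zero_IZR; specialize (Hbox i).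
    unfold pattern_lower, pattern_upper in Hbox.
    split; intros e; rewrite e in Hbox; lra.
Qed.
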